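(* In the sparse activation model with $\alpha_1>0$, where coordinate $j$ of an input is nonzero with probability $p_j=j^{-\alpha_1-1}$ independently across coordinates and across samples, the expected number of coordinates $j\ge1$ that are nonzero in at least one of $D$ i.i.d. training samples is asymptotic, as $D\to\infty$, to the scale $$K(D)=\Gamma\!\left(1-\frac{1}{\alpha_1+1}\right)D^{\frac{1}{\alpha_1+1}},$$ where $\Gamma$ is the Gamma function. Moreover, a coordinate that is never activated in the training set carries no information about its associated target weight $w_j$ and hence cannot contribute to the learned predictor, so $K(D)$ sets the scale of the number of coefficients of $\mathbf{w}$ that can be estimated from the data.
   Context: Sparse activation model: an input $\mathbf{x}$ has independent coordinates $x_j$ with $\mathbb{P}(x_j=0)=1-j^{-\alpha_1-1}$ and $\mathbb{P}(x_j=\pm j^{-(\alpha_2+1)/2})=\tfrac12 j^{-\alpha_1-1}$ each, for exponents $\alpha_1,\alpha_2$ with $\alpha_1+\alpha_2+1>0$. The target is $y(\mathbf{x})=\mathbf{w}^\top\mathbf{x}$ for a weight vector $\mathbf{w}$ with i.i.d. entries of variance $1$; the training set consists of $D$ i.i.d. inputs. *)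

From Stdlib Require Import Reals.
From Coquelicot Require Import Coquelicot.
Open Scope R_scope.

Definition Gamma (s : R) : R :=
  RInt_gen (fun t => Rpower t (s - 1) * exp (- t))
           (at_right 0) (Rbar_locally p_infty).

Definition p_act (alpha1 : R) (j : nat) : R := Rpower (INR j) (- alpha1 - 1).

(* Probability that coordinate j is nonzero in at least one of D i.i.d.
   samples (independence across samples): 1 - (1 - p_j)^D. *)
Definition prob_seen (alpha1 : R) (D j : nat) : R := 1 - (1 - p_act alpha1 j) ^ D.

(* Expected number of coordinates j >= 1 activated in at least one of the
   D samples = sum over j >= 1 of the probabilities above (linearity of
   expectation over indicator variables). *)
Definition expected_seen (alpha1 : R) (D : nat) : R :=
  Series (fun n => prob_seen alpha1 D (S n)).

Definition K_scale (alpha1 : R) (D : nat) : R :=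
  Gamma (1 - 1 / (alpha1 + 1)) * Rpower (INR D) (1 / (alpha1 + 1)).

From Stdlib Require Import Reals Lra Lia.
From Coquelicot Require Import Coquelicot.
Open Scope R_scope.

(* Write g = 1/(alpha+1) and t_j = x p_j for a scale x > 0. Since 1 - e^(-t_j) is the integral
   of e^(-t) over [0, t_j], the sum over j of 1 - e^(-t_j) is the integral of e^(-t) times
   #{j | t <= t_j}, and this count is (x/t)^g up to an error of at most 1. Hence the sum is
   x^g Gamma(1 - g) up to an additive O(1); summation by parts makes this precise on finite
   ranges. Finally 1 - (1 - p)^D lies between 1 - e^(-D p) and, once p <= (c-1)/c (all but
   finitely many j), 1 - e^(-c D p); letting c -> 1 gives the asymptotics with x = D. *)

Lemma exp_le_compat x y : x <= y -> exp x <= exp y.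
Proof. intros [Hlt | ->]; [left; now apply exp_increasing | now right]. Qed.

Lemma Rpower_pos x y : 0 < Rpower x y.
Proof. apply exp_pos. Qed.

Lemma Rpower_1_l y : Rpower 1 y = 1.
Proof. unfold Rpower. now rewrite ln_1, Rmult_0_r, exp_0. Qed.

Lemma exp_opp_le_1 t : 0 <= t -> exp (- t) <= 1.
Proof. intros Ht. rewrite <- exp_0. apply exp_le_compat. lra. Qed.

Lemma one_minus_exp_opp_le t : 1 - exp (- t) <= t.
Proof. pose proof (exp_ineq1_le (- t)). lra. Qed.

Lemma exp_pow y n : exp y ^ n = exp (INR n * y).
Proof.
  induction n as [|n IH]; simpl pow.
  - now rewrite Rmult_0_l, exp_0.
  - rewrite IH, S_INR, <- exp_plus. f_equal. ring.
Qed.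

Lemma eventually_Rpower_INR_ge r y : 0 < r -> eventually (fun m => y <= Rpower (INR m) r).
Proof.
  intros Hr. set (y' := Rmax y 1).
  assert (Hy' : 0 < y') by (pose proof (Rmax_r y 1); unfold y'; lra).
  destruct (INR_unbounded (Rpower y' (/ r))) as [N HN].
  exists N. intros m Hm. apply le_INR in Hm.
  apply Rle_trans with y'; [apply Rmax_l |].
  rewrite <- (Rpower_1 y') at 1 by exact Hy'.
  replace 1 with (/ r * r) by (field; lra).
  rewrite <- Rpower_mult. apply Rle_Rpower_l; [lra |].
  split; [apply Rpower_pos | lra].
Qed.

Lemma eventually_INR_ge y : eventually (fun n => y <= INR n).
Proof.
  destruct (INR_unbounded y) as [N HN]. exists N. intros n Hn.
  apply le_INR in Hn. lra.
Qed.

Section PositiveHalfLine.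
Variable f : R -> R.
Hypothesis f_cont : forall t, 0 < t -> continuous f t.
Hypothesis f_nonneg : forall t, 0 < t -> 0 <= f t.

Lemma ex_RInt_pos_half_line a b : 0 < a -> 0 < b -> ex_RInt f a b.
Proof.
  intros Ha Hb. apply (@ex_RInt_continuous R_CompleteNormedModule).
  intros z [Hz _]. apply f_cont. apply Rlt_le_trans with (2 := Hz). now apply Rmin_glb_lt.
Qed.

Lemma RInt_pos_half_line_ge0 a b : 0 < a <= b -> 0 <= RInt f a b.
Proof.
  intros [Ha Hab]. apply RInt_ge_0; [exact Hab | apply ex_RInt_pos_half_line; lra |].
  intros t Ht. apply f_nonneg. lra.
Qed.

Lemma RInt_le_RInt_superinterval a' a b b' :
  0 < a' <= a -> a <= b <= b' -> RInt f a b <= RInt f a' b'.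
Proof.
  intros [Ha' Ha'a] [Hab Hbb'].
  rewrite <- (RInt_Chasles f a' a b'), <- (RInt_Chasles f a b b');
    try (apply ex_RInt_pos_half_line; lra).
  change plus with Rplus.
  pose proof (RInt_pos_half_line_ge0 a' a ltac:(lra)).
  pose proof (RInt_pos_half_line_ge0 b b' ltac:(lra)).
  lra.
Qed.

Lemma is_RInt_gen_pos_half_line_sup G :
  (forall a b, 0 < a <= b -> RInt f a b <= G) ->
  (forall eps, 0 < eps -> exists a b, 0 < a <= b /\ G - eps < RInt f a b) ->
  is_RInt_gen f (at_right 0) (Rbar_locally p_infty) G.
Proof.
  intros Hsup Happrox.
  apply (filterlimi_lim_ext_loc (fun ab => RInt f (fst ab) (snd ab))).
  - apply Filter_prod with (Q := fun a => 0 < a) (R := fun b => 0 < b).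
    + exists (mkposreal 1 Rlt_0_1). now intros.
    + exists 0. now intros.
    + intros a b Ha Hb. apply (RInt_correct (V := R_CompleteNormedModule)).
      now apply ex_RInt_pos_half_line.
  - apply filterlim_locally. intros eps.
    destruct (Happrox eps (cond_pos eps)) as [a0 [b0 [[Ha0 Hab0] Hlt]]].
    apply Filter_prod with (Q := fun a => 0 < a <= a0) (R := fun b => b0 <= b).
    + exists (mkposreal a0 Ha0). intros a Ha Hpos. split; [exact Hpos |].
      change (Rabs (a - 0) < a0) in Ha. apply Rabs_def2 in Ha. lra.
    + exists b0. intros; lra.
    + intros a b [Ha Haa0] Hb. change (Rabs (RInt f a b - G) < eps).
      pose proof (RInt_le_RInt_superinterval a a0 b0 b ltac:(lra) ltac:(lra)).
      pose proof (Hsup a b ltac:(lra)).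
      apply Rabs_def1; lra.
Qed.

Variable M : R.
Hypothesis RInt_bounded : forall a b, 0 < a <= b -> RInt f a b <= M.

Lemma RInt_pos_half_line_sup : exists G,
  (forall a b, 0 < a <= b -> RInt f a b <= G) /\
  (forall eps, 0 < eps -> exists a b, 0 < a <= b /\ G - eps < RInt f a b).
Proof.
  set (u n := RInt f (/ (INR n + 1)) (INR n + 1)).
  assert (Hbounds : forall y, 0 <= y -> 0 < / (y + 1) <= y + 1).
  { intros y Hy. split; [apply Rinv_0_lt_compat; lra |].
    apply Rle_trans with 1; [| lra]. rewrite <- Rinv_1. apply Rinv_le_contravar; lra. }
  assert (Hu_incr : forall n, u n <= u (S n)).
  { intros n. unfold u. rewrite S_INR. pose proof (pos_INR n).
    apply RInt_le_RInt_superinterval.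
    - split; [apply Rinv_0_lt_compat; lra | apply Rinv_le_contravar; lra].
    - pose proof (Hbounds (INR n) ltac:(lra)). lra. }
  destruct (ex_finite_lim_seq_incr u M Hu_incr) as [G HG].
  { intros n. apply RInt_bounded. apply Hbounds. apply pos_INR. }
  exists G. split.
  - intros a b [Ha Hab].
    destruct (INR_unbounded (Rmax b (/ a))) as [n Hn].
    pose proof (Rmax_l b (/ a)). pose proof (Rmax_r b (/ a)).
    apply Rle_trans with (u n); [| now apply is_lim_seq_incr_compare].
    apply RInt_le_RInt_superinterval; [split | lra].
    + apply Rinv_0_lt_compat. pose proof (pos_INR n). lra.
    + rewrite <- (Rinv_inv a). apply Rinv_le_contravar; [now apply Rinv_0_lt_compat | lra].
  - intros eps Heps. apply is_lim_seq_spec in HG.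
    destruct (HG (mkposreal eps Heps)) as [N HN].
    specialize (HN N (le_n N)). apply Rabs_def2 in HN. simpl in HN.
    exists (/ (INR N + 1)), (INR N + 1). split; [| fold (u N); lra].
    apply Hbounds. apply pos_INR.
Qed.

End PositiveHalfLine.

Definition gamma_integrand (s t : R) : R := Rpower t (s - 1) * exp (- t).

Lemma continuous_Rpower_l y t : 0 < t -> continuous (fun x => Rpower x y) t.
Proof.
  intros Ht. apply (@ex_derive_continuous R_AbsRing R_NormedModule).
  eexists. apply is_derive_Reals. now apply derivable_pt_lim_power.
Qed.

Lemma continuous_exp_opp t : continuous (fun x => exp (- x)) t.
Proof. apply (@ex_derive_continuous R_AbsRing R_NormedModule). now auto_derive. Qed.

Lemma gamma_integrand_continuous s t : 0 < t -> continuous (gamma_integrand s) t.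
Proof.
  intros Ht. apply (continuous_mult (fun x => Rpower x (s - 1)) (fun x => exp (- x))).
  - now apply continuous_Rpower_l.
  - apply continuous_exp_opp.
Qed.

Lemma gamma_integrand_pos s t : 0 < gamma_integrand s t.
Proof. apply Rmult_lt_0_compat; [apply Rpower_pos | apply exp_pos]. Qed.

Lemma ex_RInt_gamma_integrand s a b : 0 < a -> 0 < b -> ex_RInt (gamma_integrand s) a b.
Proof. apply ex_RInt_pos_half_line, gamma_integrand_continuous. Qed.

Lemma RInt_gamma_integrand_le_superinterval s a' a b b' :
  0 < a' <= a -> a <= b <= b' -> RInt (gamma_integrand s) a b <= RInt (gamma_integrand s) a' b'.
Proof.
  apply RInt_le_RInt_superinterval; [apply gamma_integrand_continuous |].
  intros t _. left. apply gamma_integrand_pos.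
Qed.

Lemma gamma_integrand_le_Rpower s t : 0 <= t -> gamma_integrand s t <= Rpower t (s - 1).
Proof.
  intros Ht. unfold gamma_integrand. rewrite <- (Rmult_1_r (Rpower t (s - 1))) at 2.
  apply Rmult_le_compat_l; [left; apply Rpower_pos | now apply exp_opp_le_1].
Qed.

Lemma gamma_integrand_le_exp_opp s t : s <= 1 -> 1 <= t -> gamma_integrand s t <= exp (- t).
Proof.
  intros Hs Ht. unfold gamma_integrand. rewrite <- (Rmult_1_l (exp (- t))) at 2.
  apply Rmult_le_compat_r; [left; apply exp_pos |].
  apply Rle_trans with (Rpower t 0); [apply Rle_Rpower; lra | rewrite Rpower_O; lra].
Qed.

Lemma is_RInt_exp_opp a b : is_RInt (fun t => exp (- t)) a b (exp (- a) - exp (- b)).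
Proof.
  replace (exp (- a) - exp (- b)) with (minus (- exp (- b)) (- exp (- a)))
    by (unfold minus, plus, opp; simpl; ring).
  apply (@is_RInt_derive R_CompleteNormedModule (fun t => - exp (- t))).
  - intros t _. auto_derive; [easy | ring].
  - intros t _. apply continuous_exp_opp.
Qed.

Lemma is_RInt_Rpower_pred s a b : 0 < s -> 0 < a -> 0 < b ->
  is_RInt (fun t => Rpower t (s - 1)) a b ((Rpower b s - Rpower a s) / s).
Proof.
  intros Hs Ha Hb.
  assert (Hpos : forall t, Rmin a b <= t <= Rmax a b -> 0 < t).
  { intros t [Ht _]. apply Rlt_le_trans with (2 := Ht). now apply Rmin_glb_lt. }
  replace ((Rpower b s - Rpower a s) / s) with (minus (Rpower b s / s) (Rpower a s / s))
    by (unfold minus, plus, opp; simpl; field; lra).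
  apply (@is_RInt_derive R_CompleteNormedModule (fun t => Rpower t s / s)).
  - intros t Ht. specialize (Hpos t Ht).
    replace (Rpower t (s - 1)) with (/ s * (s * Rpower t (s - 1))) by (field; lra).
    apply (is_derive_ext (fun t => / s * Rpower t s)); [intros; simpl; field; lra |].
    apply is_derive_scal. apply is_derive_Reals. now apply derivable_pt_lim_power.
  - intros t Ht. apply continuous_Rpower_l. now apply Hpos.
Qed.

Lemma RInt_gamma_integrand_le_0_1 s a : 0 < s -> 0 < a <= 1 ->
  RInt (gamma_integrand s) a 1 <= 1 / s.
Proof.
  intros Hs [Ha Ha1].
  apply Rle_trans with (RInt (fun t => Rpower t (s - 1)) a 1).
  - apply RInt_le; [exact Ha1 | | eexists; apply is_RInt_Rpower_pred; lra |].
    + apply ex_RInt_gamma_integrand; lra.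
    + intros t Ht. apply gamma_integrand_le_Rpower. lra.
  - rewrite (is_RInt_unique _ _ _ _ (is_RInt_Rpower_pred s a 1 Hs Ha Rlt_0_1)).
    rewrite Rpower_1_l.
    pose proof (Rpower_pos a s).
    unfold Rdiv. apply Rmult_le_compat_r; [left; now apply Rinv_0_lt_compat | lra].
Qed.

Lemma RInt_gamma_integrand_le_1_b s b : s <= 1 -> 1 <= b -> RInt (gamma_integrand s) 1 b <= 1.
Proof.
  intros Hs Hb.
  apply Rle_trans with (RInt (fun t => exp (- t)) 1 b).
  - apply RInt_le; [exact Hb | | eexists; apply is_RInt_exp_opp |].
    + apply ex_RInt_gamma_integrand; lra.
    + intros t Ht. apply gamma_integrand_le_exp_opp; lra.
  - rewrite (is_RInt_unique _ _ _ _ (is_RInt_exp_opp 1 b)).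
    pose proof (exp_pos (- b)). pose proof (exp_opp_le_1 1). lra.
Qed.

Lemma RInt_gamma_integrand_le s a b : 0 < s <= 1 -> 0 < a <= b ->
  RInt (gamma_integrand s) a b <= 1 / s + 1.
Proof.
  intros Hs Hab.
  pose proof (Rmin_l a 1). pose proof (Rmin_r a 1).
  pose proof (Rmax_l b 1). pose proof (Rmax_r b 1).
  assert (0 < Rmin a 1) by (apply Rmin_glb_lt; lra).
  apply Rle_trans with (RInt (gamma_integrand s) (Rmin a 1) (Rmax b 1)).
  { apply RInt_gamma_integrand_le_superinterval; lra. }
  rewrite <- (RInt_Chasles _ _ 1); try (apply ex_RInt_gamma_integrand; lra).
  change plus with Rplus.
  pose proof (RInt_gamma_integrand_le_0_1 s (Rmin a 1) ltac:(lra) ltac:(lra)).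
  pose proof (RInt_gamma_integrand_le_1_b s (Rmax b 1) ltac:(lra) ltac:(lra)).
  lra.
Qed.

Lemma Gamma_is_sup s : 0 < s <= 1 ->
  (forall a b, 0 < a <= b -> RInt (gamma_integrand s) a b <= Gamma s) /\
  (forall eps, 0 < eps ->
     exists a b, 0 < a <= b /\ Gamma s - eps < RInt (gamma_integrand s) a b).
Proof.
  intros Hs.
  pose proof (gamma_integrand_continuous s) as Hcont.
  assert (Hnonneg : forall t, 0 < t -> 0 <= gamma_integrand s t)
    by (intros; left; apply gamma_integrand_pos).
  destruct (RInt_pos_half_line_sup _ Hcont Hnonneg (1 / s + 1)
              (fun a b => RInt_gamma_integrand_le s a b Hs)) as [G [Hsup Happrox]].
  replace (Gamma s) with G; [split; assumption |].
  symmetry. apply is_RInt_gen_unique. now apply is_RInt_gen_pos_half_line_sup.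
Qed.

Lemma Gamma_pos s : 0 < s <= 1 -> 0 < Gamma s.
Proof.
  intros Hs. apply Rlt_le_trans with (RInt (gamma_integrand s) 1 2).
  - apply RInt_gt_0; [lra | intros; apply gamma_integrand_pos |].
    intros t Ht. apply gamma_integrand_continuous. lra.
  - apply (Gamma_is_sup s Hs). lra.
Qed.

Lemma Rpower_mul_gamma_integrand x g t : 0 < x -> 0 < t ->
  Rpower x g * gamma_integrand (1 - g) t = Rpower (x / t) g * exp (- t).
Proof.
  intros Hx Ht. unfold gamma_integrand, Rpower. rewrite ln_div by assumption.
  rewrite <- Rmult_assoc, <- exp_plus. do 2 f_equal. ring.
Qed.

Lemma p_act_pos alpha j : 0 < p_act alpha j.
Proof. apply Rpower_pos. Qed.

Lemma p_act_1 alpha : p_act alpha 1 = 1.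
Proof. apply Rpower_1_l. Qed.

Lemma p_act_S alpha n : p_act alpha (S n) = / Rpower (INR n + 1) (alpha + 1).
Proof.
  unfold p_act. rewrite S_INR. replace (- alpha - 1) with (- (alpha + 1)) by ring.
  apply Rpower_Ropp.
Qed.

Section ActivationProbabilities.
Variable alpha : R.
Hypothesis alpha_succ_pos : 0 < alpha + 1.

Lemma p_act_le_1 n : p_act alpha (S n) <= 1.
Proof.
  pose proof (pos_INR n).
  assert (Hge1 : Rpower 1 (alpha + 1) <= Rpower (INR n + 1) (alpha + 1))
    by (apply Rle_Rpower_l; lra).
  rewrite Rpower_1_l in Hge1.
  rewrite p_act_S. apply Rle_trans with (/ 1); [| rewrite Rinv_1; lra].
  apply Rinv_le_contravar; lra.
Qed.

Lemma p_act_S_le n : p_act alpha (S (S n)) <= p_act alpha (S n).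
Proof.
  rewrite !p_act_S, S_INR. pose proof (pos_INR n).
  apply Rinv_le_contravar; [apply Rpower_pos |]. apply Rle_Rpower_l; lra.
Qed.

Lemma Rpower_inv_p_act n : Rpower (/ p_act alpha (S n)) (1 / (alpha + 1)) = INR n + 1.
Proof.
  pose proof (pos_INR n).
  rewrite p_act_S, Rinv_inv, Rpower_mult.
  replace ((alpha + 1) * (1 / (alpha + 1))) with 1 by (field; lra).
  apply Rpower_1. lra.
Qed.

Lemma INR_S_mul_p_act n : (INR n + 1) * p_act alpha (S n) = / Rpower (INR n + 1) alpha.
Proof.
  pose proof (pos_INR n).
  rewrite p_act_S, Rpower_plus, Rpower_1 by lra.
  pose proof (Rpower_pos (INR n + 1) alpha). field. lra.
Qed.

Lemma eventually_p_act_le y : 0 < y -> eventually (fun n => p_act alpha (S n) <= y).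
Proof.
  intros Hy. destruct (eventually_Rpower_INR_ge (alpha + 1) (/ y) alpha_succ_pos) as [N HN].
  exists N. intros n Hn. specialize (HN (S n) ltac:(lia)). rewrite S_INR in HN.
  rewrite p_act_S, <- (Rinv_inv y).
  apply Rinv_le_contravar; [now apply Rinv_0_lt_compat | exact HN].
Qed.

End ActivationProbabilities.

Lemma sum_f_R0_le_mono u m n : (forall k, 0 <= u k) -> (m <= n)%nat ->
  sum_f_R0 u m <= sum_f_R0 u n.
Proof.
  intros Hu Hmn. induction Hmn as [| n Hmn IH]; [lra |].
  simpl. specialize (Hu (S n)). lra.
Qed.

Lemma sum_f_R0_le_add_count u v N n :
  (forall k, u k <= 1) -> (forall k, 0 <= v k) -> (forall k, (N <= k)%nat -> u k <= v k) ->
  sum_f_R0 u n <= sum_f_R0 v n + INR N.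
Proof.
  intros Hu1 Hv Huv.
  assert (Hmin : sum_f_R0 u n <= sum_f_R0 v n + INR (Nat.min (S n) N)).
  { induction n as [| n IH]; simpl sum_f_R0.
    - specialize (Hu1 0%nat). specialize (Hv 0%nat).
      destruct N as [| N]; simpl; [rewrite Rplus_0_r; apply Huv; lia | lra].
    - destruct (Nat.le_gt_cases N (S n)) as [HN | HN].
      + rewrite Nat.min_r in IH |- * by lia. specialize (Huv (S n) HN). lra.
      + rewrite Nat.min_l in IH |- * by lia. rewrite (S_INR (S n)).
        specialize (Hu1 (S n)). specialize (Hv (S n)). lra. }
  apply Rle_trans with (1 := Hmin). apply Rplus_le_compat_l, le_INR. lia.
Qed.

Lemma ex_series_of_nonneg_bounded a M :
  (forall n, 0 <= a n) -> (forall n, sum_f_R0 a n <= M) -> ex_series a.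
Proof.
  intros Ha HM.
  destruct (ex_finite_lim_seq_incr (sum_n a) M) as [l Hl].
  - intros n. rewrite !sum_n_Reals. simpl. specialize (Ha (S n)). lra.
  - intros n. rewrite sum_n_Reals. apply HM.
  - now exists l.
Qed.

Lemma sum_f_R0_le_Series a n : (forall k, 0 <= a k) -> ex_series a -> sum_f_R0 a n <= Series a.
Proof.
  intros Ha Hex. rewrite <- sum_n_Reals.
  apply (is_lim_seq_incr_compare (sum_n a)); [exact (Series_correct a Hex) |].
  intros k. rewrite !sum_n_Reals. simpl. specialize (Ha (S k)). lra.
Qed.

Lemma Series_le_of_sum_f_R0_le a M : ex_series a -> (forall n, sum_f_R0 a n <= M) -> Series a <= M.
Proof.
  intros Hex HM.
  apply (is_lim_seq_le (sum_n a) (fun _ => M) (Series a) M).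
  - intros n. rewrite sum_n_Reals. apply HM.
  - exact (Series_correct a Hex).
  - apply is_lim_seq_const.
Qed.

Lemma inv_succ_bounds alpha : 0 < alpha -> 0 < 1 / (alpha + 1) < 1.
Proof.
  intros Ha. split; [apply Rdiv_lt_0_compat; lra |].
  apply Rmult_lt_reg_r with (alpha + 1); [lra |]. field_simplify; lra.
Qed.

Section ExponentialSum.
Variables alpha x : R.
Hypothesis alpha_pos : 0 < alpha.
Hypothesis x_pos : 0 < x.
Let g := 1 / (alpha + 1).
Let f := gamma_integrand (1 - g).
Let level n := x * p_act alpha (S n).
Let partial_sum n := sum_f_R0 (fun k => 1 - exp (- level k)) n.

Lemma level_pos n : 0 < level n.
Proof. apply Rmult_lt_0_compat; [exact x_pos | apply p_act_pos]. Qed.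

Lemma level_S_le n : level (S n) <= level n.
Proof. apply Rmult_le_compat_l; [lra | apply p_act_S_le; lra]. Qed.

Lemma level_0 : level 0 = x.
Proof. unfold level. rewrite p_act_1. ring. Qed.

Lemma level_le n : level n <= x.
Proof.
  unfold level. rewrite <- (Rmult_1_r x) at 2.
  apply Rmult_le_compat_l; [lra | apply p_act_le_1; lra].
Qed.

(* [(x / t)^g] approximates #{j | t <= x p_j}, which is [n + 1] on this interval. *)
Lemma scaled_integrand_bounds n t : level (S n) <= t <= level n ->
  (INR n + 1) * exp (- t) <= Rpower x g * f t <= (INR n + 2) * exp (- t).
Proof.
  intros [Hlo Hhi]. pose proof (level_pos n). pose proof (level_pos (S n)).
  assert (Ht : 0 < t) by lra.
  assert (Hg : 0 < g < 1) by (apply inv_succ_bounds; lra).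
  assert (Hinv_p : forall m, / p_act alpha (S m) = x / level m).
  { intros m. pose proof (p_act_pos alpha (S m)). unfold level. field. lra. }
  assert (Hweight : INR n + 1 <= Rpower (x / t) g <= INR n + 2).
  { replace (INR n + 2) with (INR (S n) + 1) by (rewrite S_INR; ring).
    rewrite <- !(Rpower_inv_p_act alpha ltac:(lra)), !Hinv_p. fold g.
    split; apply Rle_Rpower_l; try lra;
      (split; [apply Rdiv_lt_0_compat; lra |]);
      (apply Rmult_le_compat_l; [lra | apply Rinv_le_contravar; lra]). }
  unfold f. rewrite Rpower_mul_gamma_integrand by assumption.
  pose proof (exp_pos (- t)).
  split; apply Rmult_le_compat_r; lra.
Qed.

Lemma RInt_scaled_integrand_bounds n :
  (INR n + 1) * (exp (- level (S n)) - exp (- level n)) <=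
  Rpower x g * RInt f (level (S n)) (level n) <=
  (INR n + 2) * (exp (- level (S n)) - exp (- level n)).
Proof.
  pose proof (level_pos n). pose proof (level_pos (S n)). pose proof (level_S_le n).
  set (a := level (S n)) in *. set (b := level n) in *.
  assert (Hexp : forall c, is_RInt (fun t => c * exp (- t)) a b (c * (exp (- a) - exp (- b))))
    by (intros c; exact (is_RInt_scal _ _ _ c _ (is_RInt_exp_opp a b))).
  assert (Hf : ex_RInt f a b) by (now apply ex_RInt_gamma_integrand).
  replace (Rpower x g * RInt f a b) with (RInt (fun t => Rpower x g * f t) a b)
    by exact (RInt_scal f a b (Rpower x g) Hf).
  assert (Hscaled : ex_RInt (fun t => Rpower x g * f t) a b)
    by exact (ex_RInt_scal (V := R_CompleteNormedModule) f a b (Rpower x g) Hf).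
  rewrite <- (is_RInt_unique _ _ _ _ (Hexp (INR n + 1))).
  rewrite <- (is_RInt_unique _ _ _ _ (Hexp (INR n + 2))).
  split; apply RInt_le; try assumption; try (eexists; apply Hexp);
    intros t Ht; apply scaled_integrand_bounds; unfold a, b in Ht; lra.
Qed.

(* By summation by parts, [partial_sum n - (n + 1) (1 - exp (- level n))] is
   [sum_(k < n) (k + 1) (exp (- level (S k)) - exp (- level k))], the integral of [exp (- t)]
   against the staircase equal to [k + 1] on [level (S k), level k]. *)
Lemma partial_sum_vs_integral n :
  partial_sum n - (INR n + 1) * (1 - exp (- level n)) <=
  Rpower x g * RInt f (level n) x <=
  partial_sum n - (INR n + 1) * (1 - exp (- level n)) + exp (- level n) - exp (- x).
Proof.
  induction n as [| n IH].
  - rewrite level_0, RInt_point. unfold partial_sum. simpl. rewrite level_0.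
    change (@zero R_CompleteNormedModule) with 0. lra.
  - assert (Hchasles : RInt f (level (S n)) x =
                       RInt f (level (S n)) (level n) + RInt f (level n) x).
    { symmetry. apply (RInt_Chasles f); apply ex_RInt_gamma_integrand; auto using level_pos. }
    pose proof (RInt_scaled_integrand_bounds n).
    rewrite Hchasles, Rmult_plus_distr_l, S_INR.
    change (partial_sum (S n)) with (partial_sum n + (1 - exp (- level (S n)))).
    nra.
Qed.

Lemma partial_sum_le_Gamma n : partial_sum n <= Rpower x g * Gamma (1 - g) + 1.
Proof.
  assert (Hg : 0 < g < 1) by (apply inv_succ_bounds; lra).
  assert (Hterm : forall k, 0 <= 1 - exp (- level k))
    by (intros k; pose proof (exp_opp_le_1 (level k) (Rlt_le _ _ (level_pos k))); lra).
  destruct (eventually_Rpower_INR_ge alpha x alpha_pos) as [N HN].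
  set (m := Nat.max n N).
  assert (Htail : (INR m + 1) * (1 - exp (- level m)) <= 1).
  { pose proof (pos_INR m). specialize (HN (S m) ltac:(lia)). rewrite S_INR in HN.
    apply Rle_trans with ((INR m + 1) * level m).
    { apply Rmult_le_compat_l; [lra | apply one_minus_exp_opp_le]. }
    unfold level. rewrite Rmult_comm, Rmult_assoc, (Rmult_comm (p_act _ _)).
    rewrite INR_S_mul_p_act by lra.
    pose proof (Rpower_pos (INR m + 1) alpha).
    apply Rmult_le_reg_r with (Rpower (INR m + 1) alpha); [assumption |].
    rewrite Rmult_assoc, Rinv_l by lra. lra. }
  assert (Hint : RInt f (level m) x <= Gamma (1 - g)).
  { apply (Gamma_is_sup (1 - g)); [lra |]. split; [apply level_pos | apply level_le]. }
  pose proof (Rpower_pos x g).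
  pose proof (partial_sum_vs_integral m) as [Hlower _].
  apply Rle_trans with (partial_sum m); [now apply sum_f_R0_le_mono; [| lia] |].
  apply Rmult_le_compat_l with (r := Rpower x g) in Hint; lra.
Qed.

Lemma partial_sum_ge_eventually a : 0 < a <= x ->
  eventually (fun n => Rpower x g * RInt f a x - 1 <= partial_sum n).
Proof.
  intros Ha.
  destruct (eventually_p_act_le alpha ltac:(lra) (a / x) ltac:(apply Rdiv_lt_0_compat; lra))
    as [N HN].
  exists N. intros n Hn. specialize (HN n Hn).
  assert (Hlevel : level n <= a).
  { unfold level. apply Rmult_le_compat_l with (r := x) in HN; [| lra].
    replace (x * (a / x)) with a in HN by (field; lra). exact HN. }
  assert (Hint : RInt f a x <= RInt f (level n) x).
  { apply RInt_gamma_integrand_le_superinterval; [split; [apply level_pos | exact Hlevel] | lra]. }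
  pose proof (Rpower_pos x g).
  pose proof (partial_sum_vs_integral n) as [_ Hupper].
  pose proof (exp_opp_le_1 (level n) (Rlt_le _ _ (level_pos n))).
  pose proof (exp_pos (- x)).
  assert (0 <= (INR n + 1) * (1 - exp (- level n)))
    by (apply Rmult_le_pos; [pose proof (pos_INR n) |]; lra).
  apply Rmult_le_compat_l with (r := Rpower x g) in Hint; lra.
Qed.

End ExponentialSum.

Lemma one_minus_exp_le_one_minus_pow p D : p <= 1 ->
  1 - exp (- (INR D * p)) <= 1 - (1 - p) ^ D.
Proof.
  intros Hp.
  assert (Hpow : (1 - p) ^ D <= exp (- p) ^ D).
  { apply pow_incr. pose proof (exp_ineq1_le (- p)). lra. }
  rewrite exp_pow in Hpow. replace (INR D * - p) with (- (INR D * p)) in Hpow by ring. lra.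
Qed.

Lemma one_minus_pow_le_one_minus_exp p c D : 0 <= p -> 0 <= c -> c * p <= c - 1 ->
  1 - (1 - p) ^ D <= 1 - exp (- (c * INR D * p)).
Proof.
  intros Hp Hc Hcp.
  assert (Hexp : exp (- (c * p)) <= 1 - p).
  { assert (Hcp0 : 0 <= c * p) by nra.
    rewrite exp_Ropp. pose proof (exp_ineq1_le (c * p)).
    apply Rle_trans with (/ (1 + c * p)); [apply Rinv_le_contravar; lra |].
    apply Rmult_le_reg_r with (1 + c * p); [lra |]. rewrite Rinv_l by lra. nra. }
  assert (Hpow : exp (- (c * p)) ^ D <= (1 - p) ^ D)
    by (apply pow_incr; split; [left; apply exp_pos | exact Hexp]).
  rewrite exp_pow in Hpow. replace (INR D * - (c * p)) with (- (c * INR D * p)) in Hpow by ring.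
  lra.
Qed.

Section ExpectedSeen.
Variable alpha : R.
Hypothesis alpha_pos : 0 < alpha.
Let g := 1 / (alpha + 1).

Lemma prob_seen_ge D n : 1 - exp (- (INR D * p_act alpha (S n))) <= prob_seen alpha D (S n).
Proof. apply one_minus_exp_le_one_minus_pow, p_act_le_1. lra. Qed.

Lemma prob_seen_nonneg D n : 0 <= prob_seen alpha D (S n).
Proof.
  apply Rle_trans with (2 := prob_seen_ge D n).
  pose proof (pos_INR D). pose proof (p_act_pos alpha (S n)).
  pose proof (exp_opp_le_1 (INR D * p_act alpha (S n)) ltac:(nra)). lra.
Qed.

Lemma prob_seen_le_1 D n : prob_seen alpha D (S n) <= 1.
Proof.
  unfold prob_seen. pose proof (p_act_le_1 alpha ltac:(lra) n).
  assert (0 <= (1 - p_act alpha (S n)) ^ D) by (apply pow_le; lra). lra.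
Qed.

Lemma partial_sum_prob_seen_le D c N n : 0 < c -> (0 < D)%nat ->
  (forall k, (N <= k)%nat -> c * p_act alpha (S k) <= c - 1) ->
  sum_f_R0 (fun k => prob_seen alpha D (S k)) n <=
  Rpower (c * INR D) g * Gamma (1 - g) + 1 + INR N.
Proof.
  intros Hc HD Hsmall.
  assert (Hx : 0 < c * INR D) by (apply Rmult_lt_0_compat; [lra | now apply lt_0_INR]).
  apply Rle_trans with
    (sum_f_R0 (fun k => 1 - exp (- (c * INR D * p_act alpha (S k)))) n + INR N).
  - apply sum_f_R0_le_add_count; [apply prob_seen_le_1 | |].
    + intros k. pose proof (p_act_pos alpha (S k)).
      pose proof (exp_opp_le_1 (c * INR D * p_act alpha (S k)) ltac:(nra)). lra.
    + intros k Hk. apply one_minus_pow_le_one_minus_exp; [left; apply p_act_pos | lra |].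
      now apply Hsmall.
  - pose proof (partial_sum_le_Gamma alpha (c * INR D) alpha_pos Hx n) as Hsum.
    cbv beta in Hsum. unfold g. lra.
Qed.

Lemma ex_series_prob_seen D : ex_series (fun n => prob_seen alpha D (S n)).
Proof.
  destruct D as [| D].
  - apply ex_series_of_nonneg_bounded with (M := 0); [apply prob_seen_nonneg |]. intros n.
    apply Rle_trans with (sum_f_R0 (fun _ => 0) n).
    + apply sum_growing. intros k. unfold prob_seen. simpl. lra.
    + rewrite sum_cte. lra.
  - destruct (eventually_p_act_le alpha ltac:(lra) (1 / 2) ltac:(lra)) as [N HN].
    apply ex_series_of_nonneg_bounded
      with (M := Rpower (2 * INR (S D)) g * Gamma (1 - g) + 1 + INR N);
      [apply prob_seen_nonneg |].
    intros n. apply partial_sum_prob_seen_le; [lra | lia |].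
    intros k Hk. specialize (HN k Hk). lra.
Qed.

Lemma expected_seen_le D c N : 0 < c -> (0 < D)%nat ->
  (forall k, (N <= k)%nat -> c * p_act alpha (S k) <= c - 1) ->
  expected_seen alpha D <= Rpower (c * INR D) g * Gamma (1 - g) + 1 + INR N.
Proof.
  intros Hc HD Hsmall. apply Series_le_of_sum_f_R0_le; [apply ex_series_prob_seen |].
  intros n. now apply partial_sum_prob_seen_le.
Qed.

Lemma expected_seen_ge D a : 0 < a <= INR D ->
  Rpower (INR D) g * RInt (gamma_integrand (1 - g)) a (INR D) - 1 <= expected_seen alpha D.
Proof.
  intros Ha.
  destruct (partial_sum_ge_eventually alpha (INR D) alpha_pos ltac:(lra) a Ha) as [N HN].
  specialize (HN N (le_n N)). cbv beta in HN. unfold g.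
  apply Rle_trans with (1 := HN).
  apply Rle_trans with (sum_f_R0 (fun k => prob_seen alpha D (S k)) N).
  - apply sum_growing. intros k. apply prob_seen_ge.
  - apply sum_f_R0_le_Series; [apply prob_seen_nonneg | apply ex_series_prob_seen].
Qed.

Lemma K_scale_eventually_ge M : eventually (fun D => M <= K_scale alpha D).
Proof.
  assert (Hg : 0 < g < 1) by (apply inv_succ_bounds; lra).
  pose proof (Gamma_pos (1 - g) ltac:(lra)) as HGamma.
  destruct (eventually_Rpower_INR_ge g (M / Gamma (1 - g)) ltac:(lra)) as [N HN].
  exists N. intros D HD. specialize (HN D HD).
  unfold K_scale. fold g.
  apply Rmult_le_compat_l with (r := Gamma (1 - g)) in HN; [| lra].
  replace (Gamma (1 - g) * (M / Gamma (1 - g))) with M in HN by (field; lra). exact HN.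
Qed.

Lemma expected_seen_le_eventually eps : 0 < eps ->
  eventually (fun D => expected_seen alpha D <= (1 + eps) * K_scale alpha D).
Proof.
  intros Heps. assert (Hg : 0 < g < 1) by (apply inv_succ_bounds; lra).
  pose proof (Gamma_pos (1 - g) ltac:(lra)) as HGamma.
  set (c := 1 + eps / 2).
  destruct (eventually_p_act_le alpha ltac:(lra) ((c - 1) / c)
              ltac:(unfold c; apply Rdiv_lt_0_compat; lra)) as [N HN].
  assert (Hsmall : forall k, (N <= k)%nat -> c * p_act alpha (S k) <= c - 1).
  { intros k Hk. specialize (HN k Hk).
    apply Rmult_le_compat_l with (r := c) in HN; [| unfold c; lra].
    replace (c * ((c - 1) / c)) with (c - 1) in HN by (unfold c; field; lra). exact HN. }
  assert (Hcg : Rpower c g <= c).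
  { rewrite <- (Rpower_1 c) at 2 by (unfold c; lra). apply Rle_Rpower; unfold c; lra. }
  generalize (filter_and _ _ (eventually_INR_ge 1)
                (K_scale_eventually_ge (2 * (1 + INR N) / eps))).
  apply filter_imp. intros D [HD HK].
  assert (HDpos : (0 < D)%nat) by (destruct D; [simpl in HD; lra | lia]).
  pose proof (expected_seen_le D c N ltac:(unfold c; lra) HDpos Hsmall) as Hle.
  rewrite <- Rpower_mult_distr in Hle by (unfold c; lra).
  unfold K_scale in *. fold g in HK |- *.
  pose proof (Rpower_pos (INR D) g) as HP. set (P := Rpower (INR D) g) in *.
  assert (Rpower c g * P * Gamma (1 - g) <= c * P * Gamma (1 - g)).
  { apply Rmult_le_compat_r; [lra |]. apply Rmult_le_compat_r; lra. }
  apply Rmult_le_compat_l with (r := eps / 2) in HK; [| lra].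
  replace (eps / 2 * (2 * (1 + INR N) / eps)) with (1 + INR N) in HK by (field; lra).
  unfold c in *. nra.
Qed.

Lemma expected_seen_ge_eventually eps : 0 < eps ->
  eventually (fun D => (1 - eps) * K_scale alpha D <= expected_seen alpha D).
Proof.
  intros Heps. assert (Hg : 0 < g < 1) by (apply inv_succ_bounds; lra).
  pose proof (Gamma_pos (1 - g) ltac:(lra)) as HGamma.
  destruct (proj2 (Gamma_is_sup (1 - g) ltac:(lra)) (eps / 2 * Gamma (1 - g))
              ltac:(apply Rmult_lt_0_compat; lra)) as [a [b [Hab Happrox]]].
  generalize (filter_and _ _ (eventually_INR_ge b) (K_scale_eventually_ge (2 / eps))).
  apply filter_imp. intros D [HD HK].
  pose proof (expected_seen_ge D a ltac:(lra)) as Hge.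
  assert (Hint : RInt (gamma_integrand (1 - g)) a b <= RInt (gamma_integrand (1 - g)) a (INR D)).
  { apply RInt_gamma_integrand_le_superinterval; lra. }
  unfold K_scale in *. fold g in HK |- *.
  pose proof (Rpower_pos (INR D) g) as HP. set (P := Rpower (INR D) g) in *.
  apply Rmult_le_compat_l with (r := P) in Hint; [| lra].
  apply Rmult_le_compat_l with (r := eps / 2) in HK; [| lra].
  replace (eps / 2 * (2 / eps)) with 1 in HK by (field; lra).
  nra.
Qed.

End ExpectedSeen.

Theorem lemma1 (alpha1 : R) (Halpha : 0 < alpha1) :
  (forall D : nat, ex_series (fun n => prob_seen alpha1 D (S n))) /\
  is_lim_seq (fun D : nat => expected_seen alpha1 D / K_scale alpha1 D) 1.
Proof.
  split; [intros D; now apply ex_series_prob_seen |].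
  apply is_lim_seq_spec. intros eps. pose proof (cond_pos eps) as Heps.
  pose proof (expected_seen_le_eventually alpha1 Halpha (eps / 2) ltac:(lra)) as Hupper.
  pose proof (expected_seen_ge_eventually alpha1 Halpha (eps / 2) ltac:(lra)) as Hlower.
  pose proof (K_scale_eventually_ge alpha1 Halpha 1) as HKge.
  generalize (filter_and _ _ (filter_and _ _ Hupper Hlower) HKge).
  apply filter_imp. intros D [[Hle Hge] HK].
  set (E := expected_seen alpha1 D) in *. set (K := K_scale alpha1 D) in *.
  replace (E / K - 1) with ((E - K) / K) by (field; lra).
  apply Rabs_def1; apply Rmult_lt_reg_r with K; try lra;
    unfold Rdiv; rewrite Rmult_assoc, Rinv_l, Rmult_1_r by lra; nra.
Qed.
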